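(* Let $A\subseteq\omega$ be a c.e. set of density $1$. Then the following are equivalent: (i) $A$ has a computable subset $B$ of density $1$; (ii) there is a function $w\le_T\emptyset'$ which witnesses that $A$ has density $1$.
   Context: For $S\subseteq\omega$ and $n>0$, $\rho_n(S)=|S\cap[0,n)|/n$; $S$ has density $1$ if $\lim_n\rho_n(S)=1$. A function $w:\omega\to\omega$ witnesses that $A$ has density $1$ if for all $k$ and all $n\ge w(k)$, $\rho_n(A)\ge1-2^{-k}$. *)

(* A self-contained model of (oracle) computability:
   unary partial recursive functions on nat (with a nat pairing), relativised
   to an oracle given as the graph of a function nat -> nat. *)
From mathcomp Require Import all_boot all_algebra.
Set Implicit Arguments. Unset Strict Implicit. Unset Printing Implicit Defensive.
Import GRing.Theory Num.Theory.

Definition npair (x y : nat) : nat := (2 ^ x * (y.*2.+1)).-1.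
Definition nfst (n : nat) : nat := logn 2 n.+1.
Definition nsnd (n : nat) : nat := (n.+1 %/ 2 ^ nfst n).-1./2.

Inductive prog : Type :=
| PZero | PSucc | PId | PFst | PSnd
| POrac
| PComp of prog & prog        (* PComp f g : x |-> f (g x) *)
| PPair of prog & prog
| PRec of prog & prog         (* primitive recursion on the second component *)
| PMu of prog.

Inductive eval (O : nat -> nat -> Prop) : prog -> nat -> nat -> Prop :=
| ev_zero x : eval O PZero x 0
| ev_succ x : eval O PSucc x x.+1
| ev_id x : eval O PId x x
| ev_fst x : eval O PFst x (nfst x)
| ev_snd x : eval O PSnd x (nsnd x)
| ev_orac x y : O x y -> eval O POrac x y
| ev_comp f g x y z : eval O g x y -> eval O f y z -> eval O (PComp f g) x z
| ev_pair f g x y z : eval O f x y -> eval O g x z ->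
    eval O (PPair f g) x (npair y z)
| ev_rec0 f g x y : eval O f x y -> eval O (PRec f g) (npair x 0) y
| ev_recS f g x n r y : eval O (PRec f g) (npair x n) r ->
    eval O g (npair x (npair n r)) y -> eval O (PRec f g) (npair x n.+1) y
| ev_mu f x n : eval O f (npair x n) 0 ->
    (forall m, m < n -> exists v, v <> 0 /\ eval O f (npair x m) v) ->
    eval O (PMu f) x n.

Fixpoint decode_fuel (k n : nat) : prog :=
  match k with
  | 0 => PZero
  | k'.+1 =>
    let a := nsnd n in
    match nfst n with
    | 0 => PZero | 1 => PSucc | 2 => PId | 3 => PFst | 4 => PSnd | 5 => POrac
    | 6 => PComp (decode_fuel k' (nfst a)) (decode_fuel k' (nsnd a))
    | 7 => PPair (decode_fuel k' (nfst a)) (decode_fuel k' (nsnd a))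
    | 8 => PRec (decode_fuel k' (nfst a)) (decode_fuel k' (nsnd a))
    | 9 => PMu (decode_fuel k' a)
    | _ => PZero
    end
  end.
Definition decode (n : nat) : prog := decode_fuel n.+1 n.

(* The empty oracle (constant 0): computations relative to it are the
   ordinary (unrelativised) computations. *)
Definition no_oracle : nat -> nat -> Prop := fun _ y => y = 0.

Definition char_graph (S : nat -> Prop) : nat -> nat -> Prop :=
  fun x y => (S x /\ y = 1) \/ (~ S x /\ y = 0).

Definition halting_set (e : nat) : Prop := exists y, eval no_oracle (decode e) e y.

Definition computable_in (O : nat -> nat -> Prop) (f : nat -> nat) : Prop :=
  exists p, forall x, eval O p x (f x).

Definition leT_halting (w : nat -> nat) : Prop :=
  computable_in (char_graph halting_set) w.

Definition computable_set (B : nat -> bool) : Prop :=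
  computable_in no_oracle (fun x => nat_of_bool (B x)).

Definition ce_set (A : nat -> bool) : Prop :=
  exists p, forall x, A x <-> exists y, eval no_oracle p x y.

Definition rho (S : nat -> bool) (n : nat) : rat :=
  ((count S (iota 0 n))%:R / n%:R)%R.

Definition density_one (S : nat -> bool) : Prop :=
  forall eps : rat, (0 < eps)%R -> exists N, forall n, N <= n -> 0 < n ->
    (`|rho S n - 1| < eps)%R.

Definition witnesses_density_one (w : nat -> nat) (A : nat -> bool) : Prop :=
  forall k n, w k <= n -> 0 < n -> (1 - (2%:R ^- k) <= rho A n)%R.

From mathcomp Require Import all_boot all_order all_algebra.
From mathcomp Require Import zify lra.
From Stdlib Require Import FunctionalExtensionality ClassicalEpsilon.
Set Implicit Arguments. Unset Strict Implicit. Unset Printing Implicit Defensive.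

(* (i) => (ii): for a computable B included in A, "every n >= N satisfies
   2^k |[0, n) \ B| <= n" is a co-c.e. property of (k, N), so the halting
   problem finds the least such N, and since B is included in A this N also
   works for A.
   (ii) => (i): by the limit lemma w(k) is the limit of a computable g(k, s).
   On the dyadic block [2^j - 1, 2^(j+1) - 1) let B agree with the stage-t_j
   enumeration A_t_j of A, where t_j >= j is the first stage at which every
   k <= j has g(k, t_j) > 2^j or 2^k |[0, 2^(j+1) - 1) \ A_t_j| < 2^(j+1);
   such a stage exists because A_t and g converge and w witnesses the density
   of A.  Once j is past w(k) and the convergence of g(k, _), the second
   alternative holds, so late blocks of B miss at most a 2^(1-k) fraction,
   and B has density 1.
   Computations are simulated by a clocked interpreter which is itself
   computable; it supplies both the stage approximations and the programs
   whose halting is queried. *)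

(** * Pairing *)

#[global] Arguments npair : simpl never.
#[global] Arguments nfst : simpl never.
#[global] Arguments nsnd : simpl never.

Lemma npairS x y : (npair x y).+1 = 2 ^ x * (y.*2.+1).
Proof. by rewrite /npair prednK // muln_gt0 expn_gt0. Qed.

Lemma nfst_pair x y : nfst (npair x y) = x.
Proof.
rewrite /nfst npairS lognM ?expn_gt0 // lognX logn_prime // eqxx muln1.
by rewrite logn_coprime ?addn0 // coprime2n /= odd_double.
Qed.

Lemma nsnd_pair x y : nsnd (npair x y) = y.
Proof. by rewrite /nsnd nfst_pair npairS mulKn ?expn_gt0 //= doubleK. Qed.

Lemma npair_unpair m : npair (nfst m) (nsnd m) = m.
Proof.
have [q odd_q Hm] := @pfactor_coprime 2 m.+1 (erefl _) (ltn0Sn m).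
rewrite coprime2n in odd_q.
apply: succn_inj; rewrite npairS /nsnd /nfst {2 4}Hm mulnK ?expn_gt0 //.
have -> : (q.-1./2).*2.+1 = q.
  case: q odd_q {Hm} => [//|q] /= odd_q.
  by rewrite -[X in _ = X.+1](odd_double_half q) -[odd q]negbK odd_q.
by rewrite mulnC.
Qed.

Lemma npair_ge_l x y : x <= npair x y.
Proof.
rewrite -ltnS npairS; apply: (@leq_trans (2 ^ x)); first by rewrite ltn_expl.
by rewrite leq_pmulr.
Qed.

Lemma npair_ge_r x y : y <= npair x y.
Proof.
rewrite -ltnS npairS; apply: (@leq_trans (y.*2.+1)); first by rewrite ltnS -addnn leq_addr.
by rewrite leq_pmull ?expn_gt0.
Qed.

Lemma npair_gt_r x y : 0 < x -> y < npair x y.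
Proof.
move=> x_gt0; rewrite -ltnS npairS; apply: (@leq_trans (y.*2.+1).*2); first by rewrite -addnn; lia.
by rewrite -mul2n leq_mul2r -(expn1 2) leq_exp2l.
Qed.

Lemma nfst_le n : nfst n <= n.
Proof. by rewrite -{2}(npair_unpair n) npair_ge_l. Qed.

Lemma nsnd_le n : nsnd n <= n.
Proof. by rewrite -{2}(npair_unpair n) npair_ge_r. Qed.

Lemma nsnd_lt n : 0 < nfst n -> nsnd n < n.
Proof. by move=> h; rewrite -{2}(npair_unpair n) npair_gt_r. Qed.

(** * Computable functions *)

Fixpoint prim_rec (F : nat -> nat) (G : nat -> nat -> nat -> nat) (x n : nat) : nat :=
  if n is n'.+1 then G x n' (prim_rec F G x n') else F x.

Lemma prim_rec0 F G x : prim_rec F G x 0 = F x. Proof. by []. Qed.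
Lemma prim_recS F G x n : prim_rec F G x n.+1 = G x n (prim_rec F G x n). Proof. by []. Qed.

Fixpoint const_prog (c : nat) : prog :=
  if c is c'.+1 then PComp PSucc (const_prog c') else PZero.

Section Computable.
Variable O : nat -> nat -> Prop.
Local Notation computable := (computable_in O).

Lemma eval_const_prog c x : eval O (const_prog c) x c.
Proof. by elim: c => [|c IH] /=; [exact: ev_zero | exact: ev_comp IH (ev_succ _ _)]. Qed.

Lemma computable_const c : computable (fun _ => c).
Proof. by exists (const_prog c) => x; apply: eval_const_prog. Qed.

Lemma computable_id : computable (fun x => x).
Proof. by exists PId => x; apply: ev_id. Qed.

Lemma computable_nfst : computable nfst.
Proof. by exists PFst => x; apply: ev_fst. Qed.

Lemma computable_nsnd : computable nsnd.
Proof. by exists PSnd => x; apply: ev_snd. Qed.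

Lemma computable_succ : computable S.
Proof. by exists PSucc => x; apply: ev_succ. Qed.

Lemma eq_computable f g : f =1 g -> computable f -> computable g.
Proof. by move=> fg [p Hp]; exists p => x; rewrite -fg. Qed.

Lemma computable_comp f a : computable f -> computable a -> computable (fun x => f (a x)).
Proof. by move=> [p Hp] [q Hq]; exists (PComp p q) => x; apply: ev_comp (Hq x) (Hp _). Qed.

Lemma computable_npair a b :
  computable a -> computable b -> computable (fun x => npair (a x) (b x)).
Proof. by move=> [p Hp] [q Hq]; exists (PPair p q) => x; apply: ev_pair (Hp x) (Hq x). Qed.

Lemma computable_comp2 (f : nat -> nat -> nat) a b :
  computable (fun n => f (nfst n) (nsnd n)) -> computable a -> computable b ->
  computable (fun x => f (a x) (b x)).
Proof.
move=> Hf Ha Hb; apply: eq_computable (computable_comp Hf (computable_npair Ha Hb)) => x /=.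
by rewrite nfst_pair nsnd_pair.
Qed.

Lemma computable_comp3 (f : nat -> nat -> nat -> nat) a b c :
  computable (fun n => f (nfst n) (nfst (nsnd n)) (nsnd (nsnd n))) ->
  computable a -> computable b -> computable c -> computable (fun x => f (a x) (b x) (c x)).
Proof.
move=> Hf Ha Hb Hc.
apply: eq_computable (computable_comp Hf (computable_npair Ha (computable_npair Hb Hc))) => x /=.
by rewrite !(nfst_pair, nsnd_pair).
Qed.

Lemma computable_comp4 (f : nat -> nat -> nat -> nat -> nat) a b c d :
  computable (fun n => f (nfst n) (nfst (nsnd n)) (nfst (nsnd (nsnd n))) (nsnd (nsnd (nsnd n)))) ->
  computable a -> computable b -> computable c -> computable d ->
  computable (fun x => f (a x) (b x) (c x) (d x)).
Proof.
move=> Hf Ha Hb Hc Hd.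
apply: eq_computable (computable_comp Hf
  (computable_npair Ha (computable_npair Hb (computable_npair Hc Hd)))) => x /=.
by rewrite !(nfst_pair, nsnd_pair).
Qed.

Lemma computable_comp5 (f : nat -> nat -> nat -> nat -> nat -> nat) a b c d e :
  computable (fun n => f (nfst n) (nfst (nsnd n)) (nfst (nsnd (nsnd n)))
                   (nfst (nsnd (nsnd (nsnd n)))) (nsnd (nsnd (nsnd (nsnd n))))) ->
  computable a -> computable b -> computable c -> computable d -> computable e ->
  computable (fun x => f (a x) (b x) (c x) (d x) (e x)).
Proof.
move=> Hf Ha Hb Hc Hd He.
apply: eq_computable (computable_comp Hf (computable_npair Ha
  (computable_npair Hb (computable_npair Hc (computable_npair Hd He))))) => x /=.
by rewrite !(nfst_pair, nsnd_pair).
Qed.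

Lemma computable_prim_rec F G a b : computable F ->
  computable (fun n => G (nfst n) (nfst (nsnd n)) (nsnd (nsnd n))) ->
  computable a -> computable b -> computable (fun x => prim_rec F G (a x) (b x)).
Proof.
move=> [p Hp] [q Hq]; apply: computable_comp2; exists (PRec p q) => m.
rewrite -{1}(npair_unpair m); move: (nfst m) (nsnd m) => x n.
elim: n => [|n IH]; first exact: ev_rec0.
have := Hq (npair x (npair n (prim_rec F G x n))); rewrite !(nfst_pair, nsnd_pair).
exact: ev_recS IH.
Qed.

Lemma computable_mu f m : computable f ->
  (forall x, f (npair x (m x)) = 0 /\ forall i, i < m x -> f (npair x i) <> 0) -> computable m.
Proof.
move=> [p Hp] Hm; exists (PMu p) => x; have [H0 H1] := Hm x.
apply: ev_mu => [|i /H1 hi]; first by rewrite -H0.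
by exists (f (npair x i)).
Qed.

End Computable.

Definition ifnz (c a b : nat) : nat :=
  prim_rec nsnd (fun p _ _ => nfst p) (npair a b) c.

Lemma ifnz0 a b : ifnz 0 a b = b.
Proof. by rewrite /ifnz prim_rec0 nsnd_pair. Qed.

Lemma ifnzS c a b : ifnz c.+1 a b = a.
Proof. by rewrite /ifnz prim_recS nfst_pair. Qed.

Definition ltnb (m n : nat) : nat := m < n.
Definition eqnb (m n : nat) : nat := m == n.

(* Proves [computable_in O f] by decomposing [f] syntactically into
   compositions, pairings and primitive recursions of the base functions
   registered in the hint database [computable]. *)
Ltac computable_tac :=
  match goal with
  | |- computable_in _ (fun _ => ?c) => apply: computable_const
  | |- computable_in _ (fun x => x) => apply: computable_id
  | |- computable_in _ (fun x => prim_rec ?F ?G (@?a x) (@?b x)) =>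
      apply: (computable_prim_rec (F:=F) (G:=G));
      [computable_tac | cbv beta; computable_tac | computable_tac | computable_tac]
  | |- computable_in _ (fun x => npair (@?a x) (@?b x)) =>
      apply: (computable_npair (a:=a) (b:=b)); [computable_tac | computable_tac]
  | |- computable_in _ (fun x => ?f (@?a x) (@?b x) (@?c x) (@?d x) (@?e x)) =>
      apply: (computable_comp5 (f:=f));
      [computable_base | computable_tac | computable_tac | computable_tac | computable_tac
      | computable_tac]
  | |- computable_in _ (fun x => ?f (@?a x) (@?b x) (@?c x) (@?d x)) =>
      apply: (computable_comp4 (f:=f));
      [computable_base | computable_tac | computable_tac | computable_tac | computable_tac]
  | |- computable_in _ (fun x => ?f (@?a x) (@?b x) (@?c x)) =>
      apply: (computable_comp3 (f:=f));
      [computable_base | computable_tac | computable_tac | computable_tac]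
  | |- computable_in _ (fun x => ?f (@?a x) (@?b x)) =>
      apply: (computable_comp2 (f:=f)); [computable_base | computable_tac | computable_tac]
  | |- computable_in _ (fun x => ?f (@?a x)) =>
      apply: (computable_comp (f:=f)); [computable_base | computable_tac]
  | |- computable_in _ ?f => computable_base
  end
with computable_base :=
  first [ solve [eauto with computable]
        | apply: computable_nfst | apply: computable_nsnd | apply: computable_succ
        | (progress cbv beta; computable_tac) ].

Section Arithmetic.
Variable O : nat -> nat -> Prop.
Local Notation computable := (computable_in O).

Lemma computable_ifnz : computable (fun n => ifnz (nfst n) (nfst (nsnd n)) (nsnd (nsnd n))).
Proof. by rewrite /ifnz; computable_tac. Qed.
Local Hint Resolve computable_ifnz : computable.

Lemma computable_pred : computable predn.
Proof.
apply: (@eq_computable _ (fun n => prim_rec (fun _ => 0) (fun _ k _ => k) 0 n)); first by case.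
computable_tac.
Qed.
Local Hint Resolve computable_pred : computable.

Lemma computable_addn : computable (fun n => nfst n + nsnd n).
Proof.
apply: (@eq_computable _ (fun n => prim_rec (fun x => x) (fun _ _ r => r.+1) (nfst n) (nsnd n))).
  by move=> n; elim: (nsnd n) => [|k /= ->]; rewrite ?addn0 ?addnS.
computable_tac.
Qed.
Local Hint Resolve computable_addn : computable.

Lemma computable_subn : computable (fun n => nfst n - nsnd n).
Proof.
apply: (@eq_computable _ (fun n => prim_rec (fun x => x) (fun _ _ r => r.-1) (nfst n) (nsnd n))).
  by move=> n; elim: (nsnd n) => [|k /= ->]; rewrite ?subn0 ?subnS.
computable_tac.
Qed.
Local Hint Resolve computable_subn : computable.

Lemma computable_muln : computable (fun n => nfst n * nsnd n).
Proof.
apply: (@eq_computable _ (fun n => prim_rec (fun _ => 0) (fun x _ r => r + x) (nfst n) (nsnd n))).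
  by move=> n; elim: (nsnd n) => [|k /= ->]; rewrite ?muln0 // mulnS addnC.
computable_tac.
Qed.
Local Hint Resolve computable_muln : computable.

Lemma computable_expn : computable (fun n => nfst n ^ nsnd n).
Proof.
apply: (@eq_computable _ (fun n => prim_rec (fun _ => 1) (fun x _ r => r * x) (nfst n) (nsnd n))).
  by move=> n; elim: (nsnd n) => [|k /= ->]; rewrite ?expn0 // expnS mulnC.
computable_tac.
Qed.

Lemma computable_ltnb : computable (fun n => ltnb (nfst n) (nsnd n)).
Proof.
apply: (@eq_computable _ (fun n => 1 - ((nfst n).+1 - nsnd n))).
  by move=> n; rewrite /ltnb; case: ltnP; lia.
computable_tac.
Qed.

Lemma computable_eqnb : computable (fun n => eqnb (nfst n) (nsnd n)).
Proof.
apply: (@eq_computable _ (fun n => 1 - ((nfst n - nsnd n) + (nsnd n - nfst n)))).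
  by move=> n; rewrite /eqnb; case: eqP; lia.
computable_tac.
Qed.

End Arithmetic.
#[export] Hint Resolve computable_ifnz computable_pred computable_addn computable_subn
  computable_muln computable_expn computable_ltnb computable_eqnb : computable.

(** * A clocked interpreter *)

Lemma decode_fuel_stable k1 k2 n : n < k1 -> n < k2 -> decode_fuel k1 n = decode_fuel k2 n.
Proof.
elim: k1 k2 n => [|k1 IH] [|k2] n //= lt1 lt2.
have stable m : m <= nsnd n -> 0 < nfst n -> decode_fuel k1 m = decode_fuel k2 m.
  by move=> le_m /nsnd_lt lt_n; apply: IH; lia.
case E: (nfst n) => [|[|[|[|[|[|[|[|[|[|t]]]]]]]]]] //; have pos : 0 < nfst n by rewrite E.
all: by rewrite !stable ?nfst_le ?nsnd_le.
Qed.

Definition decode_step (t : nat) (p1 p2 p : prog) : prog :=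
  match t with
  | 0 => PZero | 1 => PSucc | 2 => PId | 3 => PFst | 4 => PSnd | 5 => POrac
  | 6 => PComp p1 p2 | 7 => PPair p1 p2 | 8 => PRec p1 p2 | 9 => PMu p | _ => PZero end.

Lemma decodeE c : decode c =
  decode_step (nfst c) (decode (nfst (nsnd c))) (decode (nsnd (nsnd c))) (decode (nsnd c)).
Proof.
rewrite {1}/decode /=.
have fuel m : m <= nsnd c -> 0 < nfst c -> decode_fuel c m = decode m.
  by move=> le_m /nsnd_lt lt_c; apply: decode_fuel_stable; lia.
case E: (nfst c) => [|[|[|[|[|[|[|[|[|[|t]]]]]]]]]] //=; have pos : 0 < nfst c by rewrite E.
all: by rewrite !fuel ?nfst_le ?nsnd_le.
Qed.

Fixpoint code (p : prog) : nat :=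
  match p with
  | PZero => npair 0 0 | PSucc => npair 1 0 | PId => npair 2 0 | PFst => npair 3 0
  | PSnd => npair 4 0 | POrac => npair 5 0
  | PComp f g => npair 6 (npair (code f) (code g))
  | PPair f g => npair 7 (npair (code f) (code g))
  | PRec f g => npair 8 (npair (code f) (code g))
  | PMu f => npair 9 (code f) end.

Lemma codeK : cancel code decode.
Proof.
by elim=> /= [||||||f IHf g IHg|f IHf g IHg|f IHf g IHg|f IHf];
  rewrite decodeE !(nfst_pair, nsnd_pair) /= ?IHf ?IHg.
Qed.

(* A clocked unbounded search over a coded partial function [h]: [h k = 0]
   means "no value yet", [h k = v.+1] means "value v".  The state is 0 while
   searching, 1 once stuck at an undefined value, and [k.+2] once the least
   zero [k] is found. *)
Fixpoint search_state (h : nat -> nat) (n : nat) : nat :=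
  if n is n'.+1 then
    if search_state h n' is 0 then
      match h n' with 0 => 1 | 1 => n'.+2 | _ => 0 end
    else search_state h n'
  else 0.

Definition bsearch h s := let st := search_state h s.+1 in if 1 < st then st.-1 else 0.

Lemma search_state0 h n : search_state h n = 0 -> forall k, k < n -> 1 < h k.
Proof.
elim: n => [|n IH] //= H k; case E: (search_state h n) H => [|st] //.
case E2: (h n) => [|[|v]] // _; rewrite ltnS leq_eqVlt => /orP [/eqP -> | ]; first by rewrite E2.
exact: IH.
Qed.

Lemma search_state_found h n k : search_state h n = k.+2 ->
  [/\ k < n, h k = 1 & forall m, m < k -> 1 < h m].
Proof.
elim: n => [|n IH] //=; case E: (search_state h n) => [|st].
  by case E2: (h n) => [|[|v]] // [<-]; split => //; apply: search_state0.
by move=> /(etrans E)/IH [lt_k hk hm]; split => //; lia.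
Qed.

Lemma search_state_make h n k : k < n -> h k = 1 -> (forall m, m < k -> 1 < h m) ->
  search_state h n = k.+2.
Proof.
move=> lt_k hk hm; have before : search_state h k = 0.
  elim: k hm {lt_k hk} => [|k IH] hm //=; rewrite IH => [|m lt_m]; last by apply: hm; lia.
  by case: (h k) (hm k (ltnSn k)) => [|[|v]].
elim: n lt_k => [|n IH] //; rewrite ltnS leq_eqVlt => /orP [/eqP <- | /IH /= -> //].
by rewrite /= before hk.
Qed.

Lemma bsearch_found h s y : bsearch h s = y.+1 ->
  [/\ y <= s, h y = 1 & forall m, m < y -> 1 < h m].
Proof.
rewrite /bsearch; case E: (search_state h s.+1) => [|[|st]] //= [<-].
by case: (search_state_found E).
Qed.

Lemma bsearch_make h s y : y <= s -> h y = 1 -> (forall m, m < y -> 1 < h m) ->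
  bsearch h s = y.+1.
Proof. by move=> le_y hy hm; rewrite /bsearch (@search_state_make h s.+1 y). Qed.

(* One clock tick of the interpreter, given the values [E c' x'] of
   subcomputations at the previous clock.  Results are coded as in
   [search_state]; a computation on [(c, x)] needs clock above [npair c x],
   so that the values at clock [s] form a finite table. *)
Definition run_step (E : nat -> nat -> nat) (o : nat -> nat) (s c x : nat) : nat :=
  if s < npair c x then 0 else
  match nfst c with
  | 1 => x.+2 | 2 => x.+1 | 3 => (nfst x).+1 | 4 => (nsnd x).+1 | 5 => (o x).+1
  | 6 => if E (nsnd (nsnd c)) x is r.+1 then E (nfst (nsnd c)) r else 0
  | 7 => if E (nfst (nsnd c)) x is r1.+1 then
           (if E (nsnd (nsnd c)) x is r2.+1 then (npair r1 r2).+1 else 0) else 0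
  | 8 => if nsnd x is n.+1 then
           (if E c (npair (nfst x) n) is r.+1
            then E (nsnd (nsnd c)) (npair (nfst x) (npair n r)) else 0)
         else E (nfst (nsnd c)) (nfst x)
  | 9 => bsearch (fun k => E (nsnd c) (npair x k)) s
  | _ => 1 end.

Fixpoint run (o : nat -> nat) (s c x : nat) : nat :=
  if s is s'.+1 then run_step (run o s') o s' c x else 0.

Lemma run_step_mono E E' o s s' c x y : s <= s' ->
  (forall c' x' v, E c' x' = v.+1 -> E' c' x' = v.+1) ->
  run_step E o s c x = y.+1 -> run_step E' o s' c x = y.+1.
Proof.
move=> le_s EE'; rewrite /run_step; case: (ltnP s (npair c x)) => // le_cx.
rewrite ltnNge (leq_trans le_cx le_s) /=.
case: (nfst c) => [|[|[|[|[|[|[|[|[|[|t]]]]]]]]]] //.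
- by case E1: (E _ x) => [|r] //; rewrite (EE' _ _ _ E1); apply: EE'.
- case E1: (E _ x) => [|r] //; case E2: (E (nsnd (nsnd c)) x) => [|r2] //.
  by rewrite (EE' _ _ _ E1) (EE' _ _ _ E2).
- case: (nsnd x) => [|n]; first exact: EE'.
  by case E1: (E c _) => [|r] //; rewrite (EE' _ _ _ E1); apply: EE'.
- move=> /bsearch_found [le_y hy hm]; apply: bsearch_make; [lia | exact: EE' |].
  by move=> m /hm; case E1: (E _ _) => [|[|v]] // _; rewrite (EE' _ _ _ E1).
Qed.

Lemma run_mono o s s' c x y : s <= s' -> run o s c x = y.+1 -> run o s' c x = y.+1.
Proof.
have runS s1 c1 x1 y1 : run o s1 c1 x1 = y1.+1 -> run o s1.+1 c1 x1 = y1.+1.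
  elim: s1 c1 x1 y1 => [|s1 IH] //= c1 x1 y1; exact: run_step_mono.
elim: s' => [|s' IH]; first by rewrite leqn0 => /eqP ->.
by rewrite leq_eqVlt => /orP [/eqP -> // | /IH run_s /run_s /runS].
Qed.

Lemma eq_run o o' s c x : (forall q, q <= s -> o q = o' q) -> run o s c x = run o' s c x.
Proof.
elim: s c x => [|s IH] c x //= eq_o; rewrite /run_step; case: ltnP => // le_cx.
have -> : run o s = run o' s.
  apply: functional_extensionality => c'; apply: functional_extensionality => x'.
  by apply: IH => q le_q; apply: eq_o; apply: leqW.
by rewrite eq_o //; apply: leq_trans (npair_ge_r c x) (leqW le_cx).
Qed.

Lemma run_stepE E o s c x : npair c x <= s -> run_step E o s c x =
  match nfst c with
  | 1 => x.+2 | 2 => x.+1 | 3 => (nfst x).+1 | 4 => (nsnd x).+1 | 5 => (o x).+1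
  | 6 => if E (nsnd (nsnd c)) x is r.+1 then E (nfst (nsnd c)) r else 0
  | 7 => if E (nfst (nsnd c)) x is r1.+1 then
           (if E (nsnd (nsnd c)) x is r2.+1 then (npair r1 r2).+1 else 0) else 0
  | 8 => if nsnd x is n.+1 then
           (if E c (npair (nfst x) n) is r.+1
            then E (nsnd (nsnd c)) (npair (nfst x) (npair n r)) else 0)
         else E (nfst (nsnd c)) (nfst x)
  | 9 => bsearch (fun k => E (nsnd c) (npair x k)) s
  | _ => 1 end.
Proof. by move=> le_cx; rewrite /run_step ltnNge le_cx. Qed.

Lemma exists_common_stage (P : nat -> nat -> Prop) n :
  (forall m s s', s <= s' -> P m s -> P m s') ->
  (forall m, m < n -> exists s, P m s) -> exists S, forall m, m < n -> P m S.
Proof.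
move=> P_mono; elim: n => [|n IH] H; first by exists 0.
have [S1 HS1] : exists S, forall m, m < n -> P m S by apply: IH => m lt_m; apply: H; lia.
have [S2 HS2] := H n (ltnSn n).
exists (maxn S1 S2) => m; rewrite ltnS leq_eqVlt => /orP [/eqP -> | /HS1].
  by apply: P_mono HS2; apply: leq_maxr.
by apply: P_mono; apply: leq_maxl.
Qed.

Section RunSpec.
Variables (Orel : nat -> nat -> Prop) (o : nat -> nat).
Hypothesis Orel_graph : forall q v, Orel q v <-> v = o q.

Lemma run_sound s c x y : run o s c x = y.+1 -> eval Orel (decode c) x y.
Proof.
have Ho q : Orel q (o q) by apply/Orel_graph.
elim: s c x y => [|s IH] c x y //=; rewrite /run_step; case: ltnP => // _.
have dc := decodeE c; rewrite dc.
case: (nfst c) dc => [|[|[|[|[|[|[|[|[|[|t]]]]]]]]]] /= dc.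
all: try by move=> [<-]; constructor.
- by case E1: (run o s _ x) => [|r] // H; apply: ev_comp (IH _ _ _ E1) (IH _ _ _ H).
- case E1: (run o s _ x) => [|r1] //; case E2: (run o s _ x) => [|r2] // [<-].
  exact: ev_pair (IH _ _ _ E1) (IH _ _ _ E2).
- move=> H; rewrite -(npair_unpair x); move: H.
  case: (nsnd x) => [|n]; first by move/IH; apply: ev_rec0.
  case E1: (run o s c _) => [|r] // /IH; apply: ev_recS.
  by rewrite -dc; apply: IH E1.
- move=> /bsearch_found [_ /IH h0 hm]; apply: ev_mu => // m /hm.
  by case E1: (run o s _ _) => [|[|v]] // _; exists v.+1; split => //; apply: IH E1.
Qed.

Lemma run_complete p x y :
  eval Orel p x y -> forall c, decode c = p -> exists s, run o s c x = y.+1.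
Proof.
(* [ev_mu] nests [eval] under an existential, which the generated induction
   principle does not cover; hence the explicit fixpoint. *)
move: p x y; fix IH 4 => p x y ev c.
destruct ev as [x|x|x|x|x|x y Hxy|f g x y z Hg Hf|f g x y z Hf Hg|f g x y Hf
  |f g x n r y Hr Hg|f x n H0 Hall];
  rewrite decodeE; case E: (nfst c) => [|[|[|[|[|[|[|[|[|[|t]]]]]]]]]] //= dc.
all: try by exists (npair c x).+1; rewrite /= run_stepE // E.
- by move/Orel_graph: Hxy => ->; exists (npair c x).+1; rewrite /= run_stepE // E.
- case: dc => df dg; have [s1 Hs1] := IH _ _ _ Hg _ dg; have [s2 Hs2] := IH _ _ _ Hf _ df.
  exists (maxn (npair c x) (maxn s1 s2)).+1; rewrite /= run_stepE ?E; last by lia.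
  by rewrite (run_mono _ Hs1) ?(run_mono _ Hs2) //; lia.
- case: dc => df dg; have [s1 Hs1] := IH _ _ _ Hf _ df; have [s2 Hs2] := IH _ _ _ Hg _ dg.
  exists (maxn (npair c x) (maxn s1 s2)).+1; rewrite /= run_stepE ?E; last by lia.
  by rewrite (run_mono _ Hs1) ?(run_mono _ Hs2) //; lia.
- case: dc => df _; have [s1 Hs1] := IH _ _ _ Hf _ df.
  exists (maxn (npair c (npair x 0)) s1).+1; rewrite /= run_stepE ?E; last by lia.
  by rewrite nsnd_pair nfst_pair (run_mono _ Hs1) //; lia.
- have dc' : decode c = PRec f g by rewrite decodeE E /= dc.
  case: dc => _ dg; have [s1 Hs1] := IH _ _ _ Hr _ dc'; have [s2 Hs2] := IH _ _ _ Hg _ dg.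
  exists (maxn (npair c (npair x n.+1)) (maxn s1 s2)).+1; rewrite /= run_stepE ?E; last by lia.
  by rewrite nsnd_pair nfst_pair (run_mono _ Hs1) ?(run_mono _ Hs2) //; lia.
- case: dc => df; have [s0 Hs0] := IH _ _ _ H0 _ df.
  pose nonzero_by m s := exists2 v, v <> 0 & run o s (nsnd c) (npair x m) = v.+1.
  have [S HS] : exists S, forall m, m < n -> nonzero_by m S.
    apply: exists_common_stage => [m s s' le_s [v nz_v /(run_mono le_s)] | m lt_m].
      by exists v.
    case: (Hall m lt_m) => v [nz_v Hv]; have [s Hs] := IH _ _ _ Hv _ df.
    by exists s, v.
  exists (maxn (maxn (npair c x) n) (maxn s0 S)).+1; rewrite /= run_stepE ?E; last by lia.
  apply: bsearch_make; [lia | by apply: run_mono Hs0; lia | move=> m /HS [v nz_v Hv]].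
  by rewrite (run_mono _ Hv); [case: v nz_v Hv | lia].
Qed.

End RunSpec.

(* [search_state], [bsearch] and [run_step] spelled with [prim_rec] and
   [ifnz] only, so that [computable_tac] applies; [E env] is the table of
   subcomputations. *)
Definition search_state_pr (E : nat -> nat -> nat -> nat) env f x n :=
  prim_rec (fun _ => 0) (fun p k st => ifnz st st
    (ifnz (E (nfst p) (nfst (nsnd p)) (npair (nsnd (nsnd p)) k))
          (ifnz (eqnb (E (nfst p) (nfst (nsnd p)) (npair (nsnd (nsnd p)) k)) 1) k.+2 0) 1))
   (npair env (npair f x)) n.

Definition bsearch_pr E env f x s :=
  ifnz (ltnb 1 (search_state_pr E env f x s.+1)) (search_state_pr E env f x s.+1).-1 0.

Lemma search_state_prE E env f x n :
  search_state_pr E env f x n = search_state (fun k => E env f (npair x k)) n.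
Proof.
elim: n => [|n IH] //; rewrite /search_state_pr prim_recS -/(search_state_pr _ _ _ _ _) IH /=.
rewrite !(nfst_pair, nsnd_pair); case: (search_state _ n) => [|st]; rewrite ?ifnz0 ?ifnzS //.
by case: (E env f (npair x n)) => [|[|v]]; rewrite ?ifnz0 ?ifnzS.
Qed.

Lemma bsearch_prE E env f x s : bsearch_pr E env f x s = bsearch (fun k => E env f (npair x k)) s.
Proof.
by rewrite /bsearch_pr /bsearch search_state_prE /ltnb; case: (1 < _); rewrite ?ifnz0 ?ifnzS.
Qed.

Definition run_step_pr (E : nat -> nat -> nat -> nat) (Or : nat -> nat -> nat) env s c x :=
 ifnz (ltnb s (npair c x)) 0
 (ifnz (eqnb (nfst c) 1) x.+2
 (ifnz (eqnb (nfst c) 2) x.+1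
 (ifnz (eqnb (nfst c) 3) (nfst x).+1
 (ifnz (eqnb (nfst c) 4) (nsnd x).+1
 (ifnz (eqnb (nfst c) 5) (Or env x).+1
 (ifnz (eqnb (nfst c) 6)
   (ifnz (E env (nsnd (nsnd c)) x) (E env (nfst (nsnd c)) (E env (nsnd (nsnd c)) x).-1) 0)
 (ifnz (eqnb (nfst c) 7) (ifnz (E env (nfst (nsnd c)) x * E env (nsnd (nsnd c)) x)
      (npair (E env (nfst (nsnd c)) x).-1 (E env (nsnd (nsnd c)) x).-1).+1 0)
 (ifnz (eqnb (nfst c) 8) (ifnz (nsnd x)
      (ifnz (E env c (npair (nfst x) (nsnd x).-1))
         (E env (nsnd (nsnd c))
            (npair (nfst x) (npair (nsnd x).-1 (E env c (npair (nfst x) (nsnd x).-1)).-1))) 0)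
      (E env (nfst (nsnd c)) (nfst x)))
 (ifnz (eqnb (nfst c) 9) (bsearch_pr E env (nsnd c) x s)
 1))))))))).

Lemma run_step_prE E Or env s c x : run_step_pr E Or env s c x = run_step (E env) (Or env) s c x.
Proof.
rewrite /run_step_pr /run_step /ltnb; case: ltnP => _; rewrite ?ifnzS ?ifnz0 // /eqnb bsearch_prE.
case: (nfst c) => [|[|[|[|[|[|[|[|[|[|t]]]]]]]]]] /=; rewrite ?ifnz0 ?ifnzS //.
- by case: (E env _ x) => [|r]; rewrite ?ifnz0 ?ifnzS.
- by case: (E env (nfst (nsnd c)) x) => [|r1]; case: (E env (nsnd (nsnd c)) x) => [|r2];
    rewrite ?muln0 ?ifnz0 ?ifnzS.
- case: (nsnd x) => [|n]; rewrite ?ifnz0 ?ifnzS //=.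
  by case: (E env c _) => [|r]; rewrite ?ifnz0 ?ifnzS.
Qed.

(* Finite tables are coded as lists: 0 is empty, [(npair v T).+1] is [v]
   followed by [T]. *)
Definition table_drop T d := prim_rec (fun T => T) (fun _ _ r => nsnd r.-1) T d.
Definition table_nth T d := nfst (table_drop T d).-1.

Lemma table_drop_cons v T d : table_drop (npair v T).+1 d.+1 = table_drop T d.
Proof.
elim: d => [|d IH]; first by rewrite /table_drop prim_recS /= nsnd_pair.
by rewrite /table_drop prim_recS -/(table_drop _ d.+1) IH.
Qed.

Lemma table_nth_cons0 v T : table_nth (npair v T).+1 0 = v.
Proof. by rewrite /table_nth /table_drop prim_rec0 /= nfst_pair. Qed.

Lemma table_nth_consS v T d : table_nth (npair v T).+1 d.+1 = table_nth T d.
Proof. by rewrite /table_nth table_drop_cons. Qed.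

(* The table [run_table Or env s] lists [run (Or env) s c x] at index
   [npair c x] for all [npair c x < s]; [run] vanishes elsewhere. *)
Definition table_lookup s T i := ifnz (ltnb i s) (table_nth T (s - i.+1)) 0.
Definition table_eval (p c x : nat) := table_lookup (nfst (nsnd p)) (nsnd (nsnd p)) (npair c x).
Definition table_oracle (Or : nat -> nat -> nat) (p q : nat) := Or (nfst p) q.
Definition build_table Or p n := prim_rec (fun _ => 0)
  (fun p i T => (npair (run_step_pr table_eval (table_oracle Or) p (nfst (nsnd p))
                          (nfst i) (nsnd i)) T).+1) p n.
Definition run_table Or env s :=
  prim_rec (fun _ => 0) (fun e s T => build_table Or (npair e (npair s T)) s.+1) env s.

Lemma build_table_nth Or p n i : i < n -> table_nth (build_table Or p n) (n - i.+1) =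
  run_step_pr table_eval (table_oracle Or) p (nfst (nsnd p)) (nfst i) (nsnd i).
Proof.
elim: n => [|n IH] // lt_i; rewrite /build_table prim_recS -/(build_table Or p n).
have [->|ne_i] := eqVneq i n; first by rewrite subnn table_nth_cons0.
have lt_in : i < n by rewrite ltn_neqAle ne_i -ltnS.
have -> : n.+1 - i.+1 = (n - i.+1).+1 by lia.
by rewrite table_nth_consS IH.
Qed.

Lemma run_tableE Or env s c x :
  table_lookup s (run_table Or env s) (npair c x) = run (Or env) s c x.
Proof.
elim: s c x => [|s IH] c x; first by rewrite /table_lookup /ltnb /= ifnz0.
rewrite /run_table prim_recS -/(run_table Or env s) /= /table_lookup /ltnb.
case: ltnP => lt_cx; rewrite ?ifnzS ?ifnz0; last by rewrite /run_step lt_cx.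
rewrite build_table_nth // run_step_prE !(nfst_pair, nsnd_pair).
have -> : table_eval (npair env (npair s (run_table Or env s))) = run (Or env) s.
  apply: functional_extensionality => c'; apply: functional_extensionality => x'.
  by rewrite /table_eval !(nfst_pair, nsnd_pair) IH.
by rewrite /table_oracle nfst_pair.
Qed.

Lemma computable_run O (Or : nat -> nat -> nat) :
  computable_in O (fun n => Or (nfst n) (nsnd n)) ->
  computable_in O (fun n =>
    run (Or (nfst n)) (nfst (nsnd n)) (nfst (nsnd (nsnd n))) (nsnd (nsnd (nsnd n)))).
Proof.
move=> HOr; apply: (@eq_computable _ (fun n => table_lookup (nfst (nsnd n))
  (run_table Or (nfst n) (nfst (nsnd n))) (npair (nfst (nsnd (nsnd n))) (nsnd (nsnd (nsnd n)))))).
  by move=> n; rewrite run_tableE.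
rewrite /table_lookup /run_table /build_table /run_step_pr /bsearch_pr /search_state_pr
  /table_eval /table_oracle /table_lookup /table_nth /table_drop.
computable_tac.
Qed.

(** * Density *)

Definition miss (S : pred nat) n := count (predC S) (iota 0 n).

Lemma count_missE S n : count S (iota 0 n) + miss S n = n.
Proof. by rewrite /miss count_predC size_iota. Qed.

Lemma miss_le S n : miss S n <= n.
Proof. by rewrite -{2}(count_missE S n) leq_addl. Qed.

Lemma miss_monotone S n n' : n <= n' -> miss S n <= miss S n'.
Proof. by move=> le_n; rewrite /miss -(subnKC le_n) iotaD count_cat leq_addr. Qed.

Lemma miss_sub S T n : {subset S <= T} -> miss T n <= miss S n.
Proof. by move=> sST; apply: sub_count => x /=; apply: contra => /sST. Qed.

Section Rat.
Import Order.TTheory GRing.Theory Num.Theory.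
Local Open Scope ring_scope.

Lemma rho_geE S n k : (0 < n)%N ->
  (1 - 2%:R ^- k <= rho S n) = (2 ^ k * miss S n <= n)%N.
Proof.
move=> n_gt0; have := count_missE S n; rewrite /rho; move: (count S _) (miss S n) => c m cmE.
have -> : m = (n - c)%N by lia.
have X_gt0 : (0 : rat) < 2%:R ^+ k by rewrite exprn_gt0.
rewrite ler_pdivlMr ?ltr0n // -(ler_pM2l X_gt0).
have -> : 2%:R ^+ k * ((1 - (2%:R ^+ k)^-1) * n%:R) = (2%:R ^+ k - 1) * (n%:R : rat).
  by rewrite mulrA mulrBr mulr1 mulfV // lt0r_neq0.
rewrite mulrBl mul1r lerBlDr -natrX -!natrM -natrD ler_nat mulnBr leq_subLR.
have : (2 ^ k * c <= 2 ^ k * n)%N by rewrite leq_mul2l; lia.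
lia.
Qed.

Lemma pow2_inv_lt (eps : rat) : 0 < eps -> exists k : nat, 2%:R ^- k < eps.
Proof.
move=> eps_gt0; pose k := Num.Def.archi_bound eps^-1; exists k.
rewrite -[eps]invrK ltf_pV2 ?posrE ?exprn_gt0 ?invr_gt0 //.
have : 0 <= eps^-1 by rewrite invr_ge0 ltW.
move/archi_boundP/lt_le_trans; apply.
by rewrite -natrX ler_nat ltnW // ltn_expl.
Qed.

Lemma density_one_missP S : density_one S <->
  forall k, exists N, forall n, (N <= n)%N -> (0 < n)%N -> (2 ^ k * miss S n <= n)%N.
Proof.
split=> [dS k | H eps eps_gt0].
  have [N HN] : exists N, forall n, (N <= n)%N -> (0 < n)%N -> `|rho S n - 1| < 2%:R ^- k.
    by apply: dS; rewrite invr_gt0 exprn_gt0.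
  exists N => n le_n n_gt0; rewrite -rho_geE //.
  by have := HN n le_n n_gt0; rewrite ltr_norml => /andP [? _]; lra.
have [k lt_k] := pow2_inv_lt eps_gt0; have [N HN] := H k.
exists N => n le_n n_gt0; have := HN n le_n n_gt0; rewrite -rho_geE // => ge_rho.
have le_rho : rho S n <= 1.
  by rewrite /rho ler_pdivrMr ?ltr0n // mul1r ler_nat; have := count_missE S n; lia.
by rewrite ltr_norml; apply/andP; split; lra.
Qed.

Lemma witnesses_density_oneP w S : witnesses_density_one w S <->
  forall k n, (w k <= n)%N -> (0 < n)%N -> (2 ^ k * miss S n <= n)%N.
Proof. by split=> H k n le_n n_gt0; [rewrite -rho_geE | rewrite rho_geE] => //; apply: H. Qed.

End Rat.

Definition block_miss (S : pred nat) j := count (predC S) (iota (2 ^ j - 1) (2 ^ j)).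

Lemma miss_pow2S S m : miss S (2 ^ m.+1 - 1) = miss S (2 ^ m - 1) + block_miss S m.
Proof.
have -> : 2 ^ m.+1 - 1 = (2 ^ m - 1) + 2 ^ m by have := expn_gt0 2 m; rewrite expnS; lia.
by rewrite /miss iotaD count_cat.
Qed.

Lemma miss_pow2_le S K J : (forall j, J <= j -> K * block_miss S j <= 2 ^ j.+1) ->
  forall m, J <= m -> K * miss S (2 ^ m.+1 - 1) <= K * 2 ^ J + 2 ^ m.+2.
Proof.
move=> HJ m le_Jm; rewrite -(subnKC le_Jm); elim: (m - J) => [|d IH].
  have : K * miss S (2 ^ J - 1) <= K * 2 ^ J.
    by rewrite leq_mul2l (leq_trans (miss_le _ _)) ?leq_subr ?orbT.
  by have := HJ J (leqnn J); rewrite addn0 miss_pow2S mulnDr !expnS; lia.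
have := HJ (J + d).+1 (leqW (leq_addr d J)).
by move: IH; rewrite addnS (miss_pow2S S (J + d).+1) mulnDr !expnS; lia.
Qed.

Lemma density_one_blocks S :
  (forall k, exists J, forall j, J <= j -> 2 ^ k * block_miss S j <= 2 ^ j.+1) -> density_one S.
Proof.
move=> H; apply/density_one_missP => k; have [J HJ] := H k.+3.
have bound n : 0 < n -> 2 ^ k.+3 * miss S n <= 2 ^ k.+3 * 2 ^ J + 4 * n.
  move=> n_gt0; have /andP [le_n lt_n] := trunc_log_bounds (p := 2) erefl n_gt0.
  move: (trunc_log 2 n) le_n lt_n => m le_n lt_n.
  have [le_Jm | lt_mJ] := leqP J m.
    have := miss_pow2_le HJ le_Jm.
    have : miss S n <= miss S (2 ^ m.+1 - 1) by apply: miss_monotone; lia.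
    rewrite -(leq_pmul2l (expn_gt0 2 k.+3)) !expnS; lia.
  have : miss S n <= 2 ^ J.
    by rewrite (leq_trans (miss_le _ _)) // (leq_trans (ltnW lt_n)) // leq_exp2l.
  by rewrite -(leq_pmul2l (expn_gt0 2 k.+3)); lia.
exists (2 ^ k.+3 * 2 ^ J) => n + /bound; rewrite !expnS; lia.
Qed.

Definition miss_pr (f : nat -> nat -> nat) p n :=
  prim_rec (fun _ => 0) (fun p i r => r + (1 - f p i)) p n.

Lemma missS S n : miss S n.+1 = miss S n + ~~ S n.
Proof. by rewrite /miss -addn1 iotaD count_cat /= addn0. Qed.

Lemma miss_prE (S : nat -> pred nat) p n : miss_pr (fun p x => S p x) p n = miss (S p) n.
Proof.
by elim: n => // n IH; rewrite /miss_pr prim_recS -/(miss_pr _ p n) IH missS; case: (S p n).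
Qed.

(** * The halting problem *)

Lemma eval_functional (Orel : nat -> nat -> Prop) o : (forall q v, Orel q v <-> v = o q) ->
  forall p x y1 y2, eval Orel p x y1 -> eval Orel p x y2 -> y1 = y2.
Proof.
move=> Orel_o p x y1 y2 /run_complete-/(_ _ Orel_o _ (codeK p)) [s1 H1].
move=> /run_complete-/(_ _ Orel_o _ (codeK p)) [s2 H2].
by have := run_mono (leq_maxl s1 s2) H1; rewrite (run_mono (leq_maxr s1 s2) H2) => -[].
Qed.

Lemma no_oracle_graph q v : no_oracle q v <-> v = 0.
Proof. by []. Qed.

Lemma code_const_prog a :
  code (const_prog a) =
  prim_rec (fun _ => code PZero) (fun _ _ r => npair 6 (npair (code PSucc) r)) 0 a.
Proof. by elim: a => //= a ->. Qed.

Definition halting_char (q : nat) : nat :=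
  if excluded_middle_informative (halting_set q) then 1 else 0.

Lemma char_graph_halting q v : char_graph halting_set q v <-> v = halting_char q.
Proof.
rewrite /char_graph /halting_char; case: excluded_middle_informative => h.
  by split=> [[[]|[]] | ->]; [| |left].
by split=> [[[]|[]] | ->]; [| |right].
Qed.

Lemma computable_halting_char : computable_in (char_graph halting_set) halting_char.
Proof. by exists POrac => q; apply/ev_orac/char_graph_halting. Qed.

(* [idx a] codes a program that ignores its input and searches for the least
   [m] with [f (npair a m) = 0]. *)
Lemma halting_index (f : nat -> nat) : computable_in no_oracle f ->
  exists idx : nat -> nat, (forall O, computable_in O idx) /\
    forall a, halting_set (idx a) <-> exists m, f (npair a m) = 0.
Proof.
move=> [pf Hf].
pose body a := PComp pf (PPair (const_prog a) PSnd).
have eval_body a z : eval no_oracle (body a) z (f (npair a (nsnd z))).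
  by apply: ev_comp (Hf _); apply: ev_pair; [apply: eval_const_prog | apply: ev_snd].
exists (fun a => code (PMu (body a))); split => [O | a].
  apply: (@eq_computable _ (fun a => npair 9 (npair 6 (npair (code pf) (npair 7
    (npair (prim_rec (fun _ => code PZero) (fun _ _ r => npair 6 (npair (code PSucc) r)) 0 a)
           (code PSnd))))))).
    by move=> a; rewrite /= code_const_prog.
  computable_tac.
rewrite /halting_set codeK; move: (code _) => e; split=> [[y ev_mu_y] | zero].
  inversion ev_mu_y; subst; exists y.
  by have := eval_functional no_oracle_graph H0 (eval_body a _); rewrite nsnd_pair => <-.
have zero' : exists m, f (npair a m) == 0 by case: zero => m /eqP; exists m.
exists (ex_minn zero'); case: ex_minnP => m /eqP f_m min_m.
apply: ev_mu => [|i lt_i]; first by have := eval_body a (npair e m); rewrite nsnd_pair f_m.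
exists (f (npair a i)); split; last by have := eval_body a (npair e i); rewrite nsnd_pair.
by move/eqP/min_m; lia.
Qed.

(** * (i) implies (ii) *)

Section Forward.
Variables (A B : nat -> bool).
Hypotheses (B_computable : computable_set B) (sub_BA : forall x, B x -> A x)
  (B_dense : density_one B).

Let chiB (x : nat) : nat := B x.

Definition density_check k n : nat := 1 - ltnb n (2 ^ k * miss_pr (fun _ => chiB) 0 n).

Lemma density_check_eq0 k n : (density_check k n == 0) = (n < 2 ^ k * miss B n).
Proof. by rewrite /density_check /ltnb (miss_prE (fun _ => B)); case: (n < _). Qed.

Lemma computable_density_check :
  computable_in no_oracle (fun m => density_check (nfst (nfst m)) (nsnd (nfst m) + nsnd m)).
Proof. rewrite /density_check /miss_pr; computable_tac. Qed.

Lemma leT_halting_witness : exists w, leT_halting w /\ witnesses_density_one w A.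
Proof.
have [idx [idx_computable haltE]] := halting_index computable_density_check.
have exN k : exists N, halting_char (idx (npair k N)) == 0.
  have [N dN] := (density_one_missP B).1 B_dense k; exists N.+1.
  rewrite /halting_char; case: excluded_middle_informative => // h; have [m] := (haltE _).1 h.
  rewrite !(nfst_pair, nsnd_pair) => /eqP; rewrite density_check_eq0 ltnNge dN //; lia.
pose w k := ex_minn (exN k).
have w_zero k : halting_char (idx (npair k (w k))) = 0 by rewrite /w; case: ex_minnP => N /eqP.
have w_min k i : i < w k -> halting_char (idx (npair k i)) != 0.
  by rewrite /w; case: ex_minnP => N _ min_N lt_i; apply/negP => /min_N; lia.
exists w; split.
  apply: (@computable_mu _ (fun m => halting_char (idx m))).
    by apply: computable_comp; [apply: computable_halting_char | apply: idx_computable].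
  by move=> k; split=> // i /w_min /eqP.
apply/witnesses_density_oneP => k n le_n n_gt0.
have no_halt : ~ halting_set (idx (npair k (w k))).
  by move: (w_zero k); rewrite /halting_char; case: excluded_middle_informative.
have : 2 ^ k * miss B n <= n.
  rewrite leqNgt -density_check_eq0; apply/negP => /eqP viol; apply/no_halt/haltE.
  by exists (n - w k); rewrite !(nfst_pair, nsnd_pair) subnKC.
by apply: leq_trans; rewrite leq_mul2l miss_sub ?orbT.
Qed.

End Forward.

(** * (ii) implies (i) *)

Definition run0 s c x := run (fun _ => 0) s c x.
Definition halting_approx s q := ltnb 0 (run0 s q q).
Definition run_approx e s c x := run (halting_approx e) s c x.

Section ComputableApprox.
Variable O : nat -> nat -> Prop.
Local Notation computable := (computable_in O).

Lemma computable_run0 : computable (fun n => run0 (nfst n) (nfst (nsnd n)) (nsnd (nsnd n))).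
Proof.
have run_const := @computable_run O (fun _ _ => 0) (computable_const O 0).
apply: eq_computable (computable_comp run_const
  (computable_npair (computable_const O 0) (computable_id O))) => n /=.
by rewrite !(nfst_pair, nsnd_pair).
Qed.
Local Hint Resolve computable_run0 : computable.

Lemma computable_run_approx : computable (fun n =>
  run_approx (nfst n) (nfst (nsnd n)) (nfst (nsnd (nsnd n))) (nsnd (nsnd (nsnd n)))).
Proof. by apply: computable_run; rewrite /halting_approx; computable_tac. Qed.

Lemma computable_trunc_log2S : computable (fun x => trunc_log 2 x.+1).
Proof.
apply: (@computable_mu _ (fun n => 1 - ltnb (nfst n).+1 (2 ^ (nsnd n).+1))); first computable_tac.
move=> x; rewrite !(nfst_pair, nsnd_pair) /ltnb trunc_log_ltn //; split=> // i lt_i.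
have : 2 ^ i.+1 <= 2 ^ trunc_log 2 x.+1 by rewrite leq_exp2l.
move/leq_trans/(_ (trunc_logP (p := 2) (n := x.+1) erefl erefl)).
by rewrite !(nfst_pair, nsnd_pair) ltnNge => ->.
Qed.

End ComputableApprox.
#[export] Hint Resolve computable_run0 computable_run_approx computable_trunc_log2S : computable.

Lemma halting_approx_sound s q : halting_approx s q = 1 -> halting_set q.
Proof.
rewrite /halting_approx /ltnb /run0; case E: (run _ s q q) => [|y] // _.
by exists y; apply: run_sound E.
Qed.

Lemma halting_approx_limit q : exists T, forall s, T <= s -> halting_approx s q = halting_char q.
Proof.
rewrite /halting_char; case: excluded_middle_informative => [[y ev_y] | not_halt].
  have [s Hs] := run_complete no_oracle_graph ev_y (erefl (decode q)).
  by exists s => s' le_s; rewrite /halting_approx /run0 (run_mono le_s Hs).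
exists 0 => s _; rewrite /halting_approx /ltnb; case E: (0 < _) => //.
by case: not_halt; apply: (@halting_approx_sound s); rewrite /halting_approx /ltnb E.
Qed.

Section Backward.
Variables (A : nat -> bool) (pA pw : prog) (w : nat -> nat).
Hypothesis pA_enum : forall x, A x <-> exists y, eval no_oracle pA x y.
Hypothesis pw_w : forall k, eval (char_graph halting_set) pw k (w k).
Hypothesis w_dense : witnesses_density_one w A.

Definition enum_at s x : bool := 0 < run0 s (code pA) x.

Lemma enum_at_sub s x : enum_at s x -> A x.
Proof.
rewrite /enum_at; case E: (run0 s (code pA) x) => [|y] // _.
by apply/pA_enum; exists y; rewrite -(codeK pA); apply: run_sound E.
Qed.

Lemma enum_at_limit n : exists S, forall s, S <= s -> forall x, x < n -> enum_at s x = A x.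
Proof.
have [S HS] : exists S, forall x, x < n -> forall s, S <= s -> enum_at s x = A x.
  apply: exists_common_stage => [x S S' le_S HS s le_s | x _]; first by apply: HS; lia.
  case Ax: (A x); last by exists 0 => s _; apply/negbTE/(contraFN (@enum_at_sub s x) Ax).
  have [y /run_complete-/(_ _ no_oracle_graph _ (codeK pA)) [S HS]] := (pA_enum x).1 Ax.
  by exists S => s le_s; rewrite /enum_at /run0 (run_mono le_s HS).
by exists S => s le_s x lt_x; apply: HS.
Qed.

(* The limit lemma: the reduction [pw] run with clock [s] relative to the
   stage-[s] approximation of the halting set. *)
Definition limit_approx k s := (run_approx s s (code pw) k).-1.

Lemma limit_approx_limit k : exists S, forall s, S <= s -> limit_approx k s = w k.
Proof.
have [s0 Hs0] := run_complete char_graph_halting (pw_w k) (codeK pw).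
have [T HT] : exists T,
    forall q, q < s0.+1 -> forall s, T <= s -> halting_approx s q = halting_char q.
  apply: exists_common_stage => [q T T' le_T HT s le_s | q _]; last exact: halting_approx_limit.
  by apply: HT; lia.
exists (maxn s0 T) => s le_s; rewrite /limit_approx /run_approx.
have run_s0 : run (halting_approx s) s0 (code pw) k = (w k).+1.
  by rewrite -Hs0; apply: eq_run => q le_q; apply: HT; lia.
by rewrite (run_mono _ run_s0) //; lia.
Qed.

Definition ready_at s j k : bool :=
  (2 ^ j < limit_approx k s) || (2 ^ k * miss (enum_at s) (2 ^ j.+1 - 1) < 2 ^ j.+1).

Definition ready_pr s j :=
  prim_rec (fun _ => 1) (fun p k r =>
    r * ifnz (ltnb (2 ^ nsnd p) (limit_approx k (nfst p))) 1
      (ltnb (2 ^ k * miss_pr (fun s x => ltnb 0 (run0 s (code pA) x))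
                       (nfst p) (2 ^ (nsnd p).+1 - 1))
            (2 ^ (nsnd p).+1)))
    (npair s j) j.+1.

Lemma ready_prE s j : ready_pr s j = all (ready_at s j) (iota 0 j.+1).
Proof.
rewrite /ready_pr; elim: j.+1 => [|n IH] //.
have -> : iota 0 n.+1 = rcons (iota 0 n) n by rewrite -cats1 -addn1 iotaD.
rewrite prim_recS IH !(nfst_pair, nsnd_pair) all_rcons andbC.
rewrite (miss_prE enum_at) /ready_at /ltnb.
by case: (2 ^ j < _); rewrite ?ifnzS ?ifnz0; case: (all _ _); case: (_ < _).
Qed.

Lemma exists_ready_stage j : exists d, all (ready_at (j + d) j) (iota 0 j.+1).
Proof.
have [S1 HS1] : exists S, forall k, k < j.+1 -> forall s, S <= s -> limit_approx k s = w k.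
  apply: exists_common_stage => [k S S' le_S HS s le_s | k _]; last exact: limit_approx_limit.
  by apply: HS; lia.
have [S2 HS2] := enum_at_limit (2 ^ j.+1 - 1).
exists (S1 + S2); apply/allP => k; rewrite mem_iota add0n => /andP [_ lt_k].
rewrite /ready_at HS1 //; last lia.
case: ltnP => //= le_w; set n := 2 ^ j.+1 - 1.
have n_gt0 : 0 < n by rewrite /n expnS; have := expn_gt0 2 j; lia.
have -> : miss (enum_at (j + (S1 + S2))) n = miss A n.
  by apply: eq_in_count => x; rewrite mem_iota add0n => /andP [_ lt_x] /=; rewrite HS2 //; lia.
have := (witnesses_density_oneP w A).1 w_dense k n; rewrite /n expnS.
by have := expn_gt0 2 j; lia.
Qed.

Definition ready_delay j := ex_minn (exists_ready_stage j).
Definition ready_stage j := j + ready_delay j.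

Lemma ready_stageP j : all (ready_at (ready_stage j) j) (iota 0 j.+1).
Proof. by rewrite /ready_stage /ready_delay; case: ex_minnP. Qed.

Lemma computable_ready_delay : computable_in no_oracle ready_delay.
Proof.
apply: (@computable_mu _ (fun n => 1 - ready_pr (nfst n + nsnd n) (nfst n))).
  by rewrite /ready_pr /limit_approx /miss_pr; computable_tac.
move=> j; rewrite !(nfst_pair, nsnd_pair) ready_prE /ready_delay.
case: ex_minnP => d -> min_d; split=> // i lt_i; rewrite !(nfst_pair, nsnd_pair) ready_prE.
by case E: (all _ _) => //; have := min_d i E; lia.
Qed.

(* [trunc_log 2 x.+1] is the index [j] of the dyadic block
   [[2^j - 1, 2^(j+1) - 1)] containing [x]. *)
Definition dense_part x := enum_at (ready_stage (trunc_log 2 x.+1)) x.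

Lemma dense_part_sub x : dense_part x -> A x.
Proof. exact: enum_at_sub. Qed.

Lemma computable_dense_part : computable_set dense_part.
Proof.
have ready_delay_computable := computable_ready_delay.
apply: (@eq_computable _ (fun x => ltnb 0
  (run0 (trunc_log 2 x.+1 + ready_delay (trunc_log 2 x.+1)) (code pA) x))) => //.
computable_tac.
Qed.

Lemma block_miss_dense_part j :
  block_miss dense_part j = block_miss (enum_at (ready_stage j)) j.
Proof.
apply: eq_in_count => x; rewrite mem_iota => /andP [le_x lt_x].
rewrite /= /dense_part (@trunc_log_eq 2 j x.+1) //.
by have := expn_gt0 2 j; rewrite expnS in lt_x *; lia.
Qed.

Lemma dense_part_blocks k :
  exists J, forall j, J <= j -> 2 ^ k * block_miss dense_part j <= 2 ^ j.+1.
Proof.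
have [S HS] := limit_approx_limit k.
exists (maxn (maxn S k) (w k)) => j le_j.
have : ready_at (ready_stage j) j k.
  by apply: (allP (ready_stageP j)); rewrite mem_iota; lia.
case/orP => [|few_missing].
  rewrite HS; last by rewrite /ready_stage; lia.
  by have := ltn_expl j (ltnSn 1); lia.
apply: leq_trans (ltnW few_missing).
by rewrite block_miss_dense_part leq_mul2l miss_pow2S leq_addl orbT.
Qed.

End Backward.

Lemma dense_computable_subset A : ce_set A ->
  (exists w, leT_halting w /\ witnesses_density_one w A) ->
  exists B, computable_set B /\ (forall x, B x -> A x) /\ density_one B.
Proof.
move=> [pA pA_enum] [w [[pw pw_w] w_dense]].
exists (dense_part pA_enum pw_w w_dense); split; last split.
- exact: computable_dense_part.
- exact: dense_part_sub.
- exact/density_one_blocks/dense_part_blocks.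
Qed.

Theorem mainTheorem12 (A : nat -> bool) :
  ce_set A -> density_one A ->
  ((exists B : nat -> bool,
       computable_set B /\ (forall x, B x -> A x) /\ density_one B)
   <->
   (exists w : nat -> nat, leT_halting w /\ witnesses_density_one w A)).
Proof.
move=> A_ce _; split=> [[B [B_computable [sub_BA B_dense]]] |].
  exact: leT_halting_witness B_computable sub_BA B_dense.
exact: dense_computable_subset.
Qed.
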